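(* Fix an instance and a feasible schedule $S$ (e.g. an optimum schedule) with $|S|$ scheduled jobs. With respect to the random hierarchical decomposition (random offset $r_0$ uniform in $[0,T/q]$), the expected number of jobs of $S$ that are position-crossing is at most $\frac{1}{q}|S|=O(\varepsilon^2|S|)$.
   Context: Jobs $j$ have integer release time $r_j$, deadline $d_j$ and processing time $p_j$ in $[0,T]$. Fix $\varepsilon>0$ with $q=1/\varepsilon^2$ an integer, $k=\log_q T$ (assume $T$ is a power of $q$), and $\ell_i=T/q^{i+1}$ for $i\ge0$. Random hierarchical decomposition: pick $r_0$ uniformly at random in $[0,T/q]$; for each $0\le i\le k$, the partition $I_i$ of $[0,T]$ consists of the intervals between consecutive points of $\{0,T\}\cup(\{r_0+s\ell_i:s\in\mathbb{Z}\}\cap(0,T))$. In a schedule, a job $j$ occupies its position, the interval $[s_j,s_j+p_j]$ where $s_j$ is its start time. A scheduled job $j$ is position-crossing if $\ell_i\le p_j<\ell_{i-1}$ for some $2\le i\le k+1$ and its position intersects (in a set of positive length) more than one interval of $I_{i-2}$. *)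

From Stdlib Require Import Reals Lra List ClassicalEpsilon.
Import ListNotations.
Open Scope R_scope.

Record Job := mkJob { rel : nat; dl : nat; pt : nat }.

(* A scheduled job: a job together with its start time s_j. *)
Definition SJob := (Job * R)%type.

Definition sjob_feasible (T : nat) (js : SJob) : Prop :=
  let (j, s) := js in
  (rel j <= T)%nat /\ (dl j <= T)%nat /\ (pt j <= T)%nat /\
  INR (rel j) <= s /\ s + INR (pt j) <= INR (dl j).

Definition ell (q T : nat) (i : nat) : R := INR T / (INR q ^ (S i)).

Definition part_point (q T : nat) (i : nat) (r0 : R) (x : R) : Prop :=
  x = 0 \/ x = INR T \/
  (0 < x < INR T /\ exists s : Z, x = r0 + IZR s * ell q T i).

Definition part_interval (q T : nat) (i : nat) (r0 : R) (a b : R) : Prop :=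
  part_point q T i r0 a /\ part_point q T i r0 b /\ a < b /\
  (forall x, a < x < b -> ~ part_point q T i r0 x).

Definition pos_overlap (s p a b : R) : Prop :=
  Rmax s a < Rmin (s + p) b.

Definition position_crossing (q k T : nat) (r0 : R) (js : SJob) : Prop :=
  let (j, s) := js in
  let p := INR (pt j) in
  exists i : nat, (2 <= i <= k + 1)%nat /\
    ell q T i <= p < ell q T (i - 1) /\
    exists a1 b1 a2 b2 : R,
      part_interval q T (i - 2) r0 a1 b1 /\
      part_interval q T (i - 2) r0 a2 b2 /\
      (a1, b1) <> (a2, b2) /\
      pos_overlap s p a1 b1 /\ pos_overlap s p a2 b2.

Definition ind (P : Prop) : R :=
  if excluded_middle_informative P then 1 else 0.

Definition num_crossing (q k T : nat) (S : list SJob) (r0 : R) : R :=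
  fold_right (fun js acc => ind (position_crossing q k T r0 js) + acc) 0 S.

(* A job of length p in [ell_i, ell_(i-1)) inside [0, T] crosses a boundary of I_(i-2)
   exactly when some grid point r0 + m ell_(i-2) falls strictly inside its position.
   As a function of r0 this indicator is ell_(i-2)-periodic with integral p over each
   period, and [0, T/q] consists of q^(i-2) whole periods, so the job crosses with
   probability p / ell_(i-2) < ell_(i-1) / ell_(i-2) = 1/q.  Summing over the jobs
   (linearity of the integral) gives the bound. *)

From Pilot Require Import Defs.
From Stdlib Require Import Reals Lra Lia List ZArith Classical ClassicalEpsilon.
From Coquelicot Require Import Coquelicot.
(* Reals exports its own [ind]; re-import to refer to [Defs.ind]. *)
Import Defs.
Open Scope R_scope.

Lemma ind_true (P : Prop) : P -> ind P = 1.
Proof. intros H; unfold ind; destruct (excluded_middle_informative P); tauto. Qed.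

Lemma ind_false (P : Prop) : ~ P -> ind P = 0.
Proof. intros H; unfold ind; destruct (excluded_middle_informative P); tauto. Qed.

Lemma ind_iff (P Q : Prop) : (P <-> Q) -> ind P = ind Q.
Proof.
  intros H; unfold ind.
  destruct (excluded_middle_informative P), (excluded_middle_informative Q); tauto.
Qed.

Lemma IZR_mult_lt_bounds (L : R) (lo m hi : Z) : 0 < L ->
  IZR lo * L < IZR m * L < IZR hi * L -> (lo < m < hi)%Z.
Proof.
  intros hL [h1 h2]; split; apply lt_IZR; apply (Rmult_lt_reg_r L); assumption.
Qed.

Lemma exists_shift_into_period (L s a : R) : 0 < L ->
  exists z : Z, a <= s - IZR z * L < a + L.
Proof.
  intros hL. exists (up ((s - a) / L) - 1)%Z.
  destruct (archimed ((s - a) / L)) as [hup1 hup2].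
  rewrite minus_IZR.
  assert (e : s - (IZR (up ((s - a) / L)) - 1) * L
              = a + L - (IZR (up ((s - a) / L)) - (s - a) / L) * L) by (field; lra).
  rewrite e; split; nra.
Qed.

Lemma is_RInt_const_on (f : R -> R) (a b c : R) : a <= b ->
  (forall x, a < x < b -> f x = c) -> is_RInt f a b ((b - a) * c).
Proof.
  intros hab H. apply (is_RInt_ext (fun _ => c)); [|exact (is_RInt_const a b c)].
  intros x; rewrite Rmin_left, Rmax_right by lra; intros hx; symmetry; auto.
Qed.

Lemma is_RInt_ind_interval (u v a b : R) : a <= b ->
  is_RInt (fun r => ind (u < r < v)) a b (Rmax 0 (Rmin v b - Rmax u a)).
Proof.
  intros hab.
  set (x1 := Rmax a (Rmin u b)). set (x2 := Rmax x1 (Rmin v b)).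
  assert (h1 : a <= x1 <= b) by (unfold x1, Rmax, Rmin; repeat destruct Rle_dec; lra).
  assert (h2 : x1 <= x2 <= b) by (unfold x2, Rmax, Rmin in *; repeat destruct Rle_dec; lra).
  assert (I1 := is_RInt_const_on (fun r => ind (u < r < v)) a x1 0 ltac:(lra)).
  assert (I2 := is_RInt_const_on (fun r => ind (u < r < v)) x1 x2 1 ltac:(lra)).
  assert (I3 := is_RInt_const_on (fun r => ind (u < r < v)) x2 b 0 ltac:(lra)).
  replace (Rmax 0 (Rmin v b - Rmax u a)) with ((x1 - a) * 0 + (x2 - x1) * 1 + (b - x2) * 0)
    by (unfold x2, x1, Rmax, Rmin; repeat destruct Rle_dec; lra).
  apply (is_RInt_Chasles _ a x2 b ((x1 - a) * 0 + (x2 - x1) * 1) ((b - x2) * 0));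
    [apply (is_RInt_Chasles _ a x1 x2 ((x1 - a) * 0) ((x2 - x1) * 1))|].
  - apply I1; intros x hx; apply ind_false.
    unfold x1, Rmax, Rmin in *; repeat destruct Rle_dec; lra.
  - apply I2; intros x hx; apply ind_true.
    unfold x2, x1, Rmax, Rmin in *; repeat destruct Rle_dec; lra.
  - apply I3; intros x hx; apply ind_false.
    unfold x2, x1, Rmax, Rmin in *; repeat destruct Rle_dec; lra.
Qed.

Definition grid_hit (L s p r : R) : Prop := exists m : Z, s < r + IZR m * L < s + p.

Lemma grid_hit_shift (L s p r : R) (z : Z) :
  grid_hit L (s - IZR z * L) p r <-> grid_hit L s p r.
Proof.
  split; intros [m hm].
  - exists (m + z)%Z; rewrite plus_IZR; lra.
  - exists (m - z)%Z; rewrite minus_IZR; lra.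
Qed.

(* On a window [a, a + L] containing c, only the grid points r and r + L can land
   in (c, c + p). *)
Lemma ind_grid_hit_on_period (L c p a r : R) : 0 < L -> 0 < p < L ->
  a <= c < a + L -> a < r < a + L ->
  ind (grid_hit L c p r) = ind (c < r < c + p) + ind (c - L < r < c + p - L).
Proof.
  intros hL hp hc hr.
  destruct (Rlt_dec c r) as [h1|h1]; destruct (Rlt_dec r (c + p)) as [h2|h2].
  - rewrite (ind_true (c < r < _)), (ind_false (c - L < r < _)) by lra.
    rewrite ind_true; [lra|].
    exists 0%Z; lra.
  - rewrite (ind_false (c < r < _)), (ind_false (c - L < r < _)) by lra.
    rewrite ind_false; [lra|].
    intros [m hm].
    assert (hm01 : (-1 < m < 1)%Z) by (apply (IZR_mult_lt_bounds L); [lra|simpl; lra]).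
    replace m with 0%Z in hm by lia; lra.
  - destruct (Rlt_dec r (c + p - L)) as [h3|h3].
    + rewrite (ind_false (c < r < _)), (ind_true (c - L < r < _)) by lra.
      rewrite ind_true; [lra|].
      exists 1%Z; lra.
    + rewrite (ind_false (c < r < _)), (ind_false (c - L < r < _)) by lra.
      rewrite ind_false; [lra|].
      intros [m hm].
      assert (hm12 : (0 < m < 2)%Z) by (apply (IZR_mult_lt_bounds L); [lra|simpl; lra]).
      replace m with 1%Z in hm by lia; lra.
  - lra.
Qed.

Lemma is_RInt_grid_hit_period (L s p a : R) : 0 < L -> 0 < p < L ->
  is_RInt (fun r => ind (grid_hit L s p r)) a (a + L) p.
Proof.
  intros hL hp.
  destruct (exists_shift_into_period L s a hL) as [z hz].
  set (c := s - IZR z * L) in hz.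
  assert (I : is_RInt (fun r => ind (c < r < c + p) + ind (c - L < r < c + p - L)) a (a + L)
                (Rmax 0 (Rmin (c + p) (a + L) - Rmax c a)
                 + Rmax 0 (Rmin (c + p - L) (a + L) - Rmax (c - L) a)))
    by (apply (is_RInt_plus (fun r => ind (c < r < c + p)));
        apply is_RInt_ind_interval; lra).
  replace (Rmax 0 (Rmin (c + p) (a + L) - Rmax c a)
           + Rmax 0 (Rmin (c + p - L) (a + L) - Rmax (c - L) a)) with p in I
    by (unfold Rmax, Rmin; repeat destruct Rle_dec; lra).
  refine (is_RInt_ext _ _ a (a + L) p _ I).
  intros r; rewrite Rmin_left, Rmax_right by lra; intros hr.
  rewrite <- (ind_iff _ _ (grid_hit_shift L s p r z)).
  symmetry; apply (ind_grid_hit_on_period L c p a r); lra.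
Qed.

Lemma is_RInt_grid_hit_periods (L s p : R) (N : nat) : 0 < L -> 0 < p < L ->
  is_RInt (fun r => ind (grid_hit L s p r)) 0 (INR N * L) (INR N * p).
Proof.
  intros hL hp. induction N as [|N IH].
  - simpl; rewrite !Rmult_0_l; exact (is_RInt_point _ 0).
  - rewrite S_INR, !Rmult_plus_distr_r, !Rmult_1_l.
    exact (is_RInt_Chasles _ _ _ _ _ _ IH (is_RInt_grid_hit_period L s p _ hL hp)).
Qed.

Section Partition.

Variables (q T l : nat) (r0 : R).
Hypothesis L_gt0 : 0 < ell q T l.

Lemma part_intervals_ordered (a1 b1 a2 b2 : R) :
  part_interval q T l r0 a1 b1 -> part_interval q T l r0 a2 b2 -> a1 < a2 -> b1 <= a2.
Proof.
  intros [_ [_ [_ hgap]]] [pa2 _] ha.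
  destruct (Rle_dec b1 a2) as [h|h]; [exact h|].
  exfalso; apply (hgap a2); [lra|exact pa2].
Qed.

Lemma part_intervals_same_left (a b1 b2 : R) :
  part_interval q T l r0 a b1 -> part_interval q T l r0 a b2 -> b1 = b2.
Proof.
  intros [_ [pb1 [h1 hgap1]]] [_ [pb2 [h2 hgap2]]].
  destruct (Rtotal_order b1 b2) as [h|[h|h]]; [|exact h|]; exfalso.
  - exact (hgap2 b1 ltac:(lra) pb1).
  - exact (hgap1 b2 ltac:(lra) pb2).
Qed.

Lemma overlapping_part_intervals_inner_point (s p a1 b1 a2 b2 : R) :
  part_interval q T l r0 a1 b1 -> part_interval q T l r0 a2 b2 -> (a1, b1) <> (a2, b2) ->
  pos_overlap s p a1 b1 -> pos_overlap s p a2 b2 ->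
  exists x, part_point q T l r0 x /\ s < x < s + p.
Proof.
  intros P1 P2 hne O1 O2; unfold pos_overlap in O1, O2.
  assert (Hs1 := Rmax_l s a1); assert (Ha1 := Rmax_r s a1).
  assert (Hp1 := Rmin_l (s + p) b1); assert (Hb1 := Rmin_r (s + p) b1).
  assert (Hs2 := Rmax_l s a2); assert (Ha2 := Rmax_r s a2).
  assert (Hp2 := Rmin_l (s + p) b2); assert (Hb2 := Rmin_r (s + p) b2).
  destruct (Rtotal_order a1 a2) as [h|[h|h]].
  - exists b1; split; [apply P1|].
    assert (hb := part_intervals_ordered _ _ _ _ P1 P2 h); lra.
  - subst a2; exfalso; apply hne; rewrite (part_intervals_same_left _ _ _ P1 P2); reflexivity.
  - exists b2; split; [apply P2|].
    assert (hb := part_intervals_ordered _ _ _ _ P2 P1 h); lra.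
Qed.

Lemma part_interval_below_grid_point (m : Z) (x : R) :
  x = r0 + IZR m * ell q T l -> 0 < x < INR T ->
  part_interval q T l r0 (Rmax 0 (x - ell q T l)) x.
Proof.
  intros hxm hx. set (L := ell q T l) in *.
  assert (ha := Rmax_l 0 (x - L)); assert (ha' := Rmax_r 0 (x - L)).
  assert (hlt : Rmax 0 (x - L) < x) by (unfold Rmax; destruct Rle_dec; lra).
  repeat split; [| |exact hlt|].
  - unfold Rmax; destruct Rle_dec as [h|h]; [|left; reflexivity].
    destruct (Req_dec (x - L) 0) as [e|e]; [left; lra|].
    right; right; split; [lra|]. exists (m - 1)%Z; rewrite minus_IZR, hxm; unfold L; ring.
  - right; right; split; [exact hx|]. exists m; exact hxm.
  - intros y hy [hy0|[hyT|[_ [m' hm']]]]; [lra|lra|]. fold L in hm'.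
    assert (hm : (m - 1 < m' < m)%Z)
      by (apply (IZR_mult_lt_bounds L); [exact L_gt0|rewrite minus_IZR; lra]).
    lia.
Qed.

Lemma part_interval_above_grid_point (m : Z) (x : R) :
  x = r0 + IZR m * ell q T l -> 0 < x < INR T ->
  part_interval q T l r0 x (Rmin (INR T) (x + ell q T l)).
Proof.
  intros hxm hx. set (L := ell q T l) in *.
  assert (hb := Rmin_l (INR T) (x + L)); assert (hb' := Rmin_r (INR T) (x + L)).
  assert (hlt : x < Rmin (INR T) (x + L)) by (unfold Rmin; destruct Rle_dec; lra).
  repeat split; [| |exact hlt|].
  - right; right; split; [exact hx|]. exists m; exact hxm.
  - unfold Rmin; destruct Rle_dec as [h|h]; [right; left; reflexivity|].
    right; right; split; [lra|]. exists (m + 1)%Z; rewrite plus_IZR, hxm; unfold L; ring.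
  - intros y hy [hy0|[hyT|[_ [m' hm']]]]; [lra|lra|]. fold L in hm'.
    assert (hm : (m < m' < m + 1)%Z)
      by (apply (IZR_mult_lt_bounds L); [exact L_gt0|rewrite plus_IZR; lra]).
    lia.
Qed.

(* Inside [0, T] the only partition points besides 0 and T are grid points, so a job
   lying in [0, T] meets two partition intervals iff a grid point is interior to it. *)
Lemma two_part_intervals_iff_grid_hit (s p : R) : 0 <= s -> s + p <= INR T ->
  (exists a1 b1 a2 b2 : R,
      part_interval q T l r0 a1 b1 /\ part_interval q T l r0 a2 b2 /\
      (a1, b1) <> (a2, b2) /\ pos_overlap s p a1 b1 /\ pos_overlap s p a2 b2)
  <-> grid_hit (ell q T l) s p r0.
Proof.
  intros hs hsp; split.
  - intros (a1 & b1 & a2 & b2 & P1 & P2 & hne & O1 & O2).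
    destruct (overlapping_part_intervals_inner_point s p a1 b1 a2 b2 P1 P2 hne O1 O2)
      as [x [[hx|[hx|[_ [m hm]]]] hsx]]; [lra|lra|].
    exists m; lra.
  - intros [m hm].
    set (x := r0 + IZR m * ell q T l) in hm.
    assert (hx : 0 < x < INR T) by lra.
    assert (I1 := part_interval_below_grid_point m x eq_refl hx).
    assert (I2 := part_interval_above_grid_point m x eq_refl hx).
    assert (h1 := proj1 (proj2 (proj2 I1))); assert (h2 := proj1 (proj2 (proj2 I2))).
    exists (Rmax 0 (x - ell q T l)), x, x, (Rmin (INR T) (x + ell q T l)).
    split; [exact I1|split; [exact I2|split; [|split]]].
    + intros e; injection e as e1 e2; lra.
    + unfold pos_overlap; apply Rmax_lub_lt; apply Rmin_glb_lt; lra.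
    + unfold pos_overlap; apply Rmax_lub_lt; apply Rmin_glb_lt; lra.
Qed.

End Partition.

Section Scales.

Variables (q T : nat).
Hypotheses (q_ge1 : (1 <= q)%nat) (T_gt0 : 0 < INR T).

Let q_gt0 : 0 < INR q.
Proof. apply lt_0_INR; lia. Qed.

Lemma ell_S (n : nat) : ell q T (S n) = ell q T n / INR q.
Proof.
  unfold ell; change (INR q ^ S (S n)) with (INR q * INR q ^ S n).
  assert (0 < INR q ^ S n) by (apply pow_lt; exact q_gt0).
  field; lra.
Qed.

Lemma ell_gt0 (n : nat) : 0 < ell q T n.
Proof. unfold ell; apply Rdiv_lt_0_compat; [exact T_gt0|apply pow_lt; exact q_gt0]. Qed.

Lemma ell_antitone (m n : nat) : (m <= n)%nat -> ell q T n <= ell q T m.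
Proof.
  assert (1 <= INR q) by (apply (le_INR 1); exact q_ge1).
  induction 1 as [|n _ IH]; [lra|].
  rewrite ell_S; apply (Rle_trans _ (ell q T n)); [|exact IH].
  apply Rmult_le_reg_r with (INR q); [exact q_gt0|].
  unfold Rdiv; rewrite Rmult_assoc, Rinv_l by lra.
  assert (0 < ell q T n) by apply ell_gt0; nra.
Qed.

Lemma ell_0_eq (l : nat) : ell q T 0 = INR (q ^ l) * ell q T l.
Proof.
  induction l as [|l IH]; [simpl; ring|].
  rewrite ell_S, IH, Nat.pow_succ_r', mult_INR; field; lra.
Qed.

Lemma ell_band_unique (i i' : nat) (p : R) : (1 <= i)%nat -> (1 <= i')%nat ->
  ell q T i <= p < ell q T (i - 1) -> ell q T i' <= p < ell q T (i' - 1) -> i = i'.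
Proof.
  intros hi hi' hb hb'.
  destruct (Nat.lt_total i i') as [h|[h|h]]; [exfalso| exact h |exfalso].
  - assert (h1 := ell_antitone i (i' - 1) ltac:(lia)); lra.
  - assert (h1 := ell_antitone i' (i - 1) ltac:(lia)); lra.
Qed.

End Scales.

Section Crossing.

Variables (q k T : nat).
Hypotheses (q_ge1 : (1 <= q)%nat) (T_gt0 : 0 < INR T).

Lemma position_crossing_iff_grid_hit (i : nat) (j : Job) (s r0 : R) :
  (2 <= i <= k + 1)%nat -> ell q T i <= INR (pt j) < ell q T (i - 1) ->
  0 <= s -> s + INR (pt j) <= INR T ->
  position_crossing q k T r0 (j, s) <-> grid_hit (ell q T (i - 2)) s (INR (pt j)) r0.
Proof.
  intros hi hband hs hsp.
  rewrite <- (two_part_intervals_iff_grid_hit q T (i - 2) r0 (ell_gt0 q T q_ge1 T_gt0 _)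
                _ _ hs hsp).
  split.
  - intros [i' [hi' [hband' hcross]]].
    rewrite (ell_band_unique q T q_ge1 T_gt0 i' i (INR (pt j))) in hcross;
      [exact hcross|lia|lia|exact hband'|exact hband].
  - intros hcross; exists i; auto.
Qed.

Lemma is_RInt_ind_position_crossing (j : Job) (s : R) : sjob_feasible T (j, s) ->
  exists v : R, is_RInt (fun r0 => ind (position_crossing q k T r0 (j, s))) 0 (ell q T 0) v /\
                v <= ell q T 0 / INR q.
Proof.
  intros (_ & hd & _ & hr & hsd).
  assert (q_gt0 : 0 < INR q) by (apply lt_0_INR; lia).
  set (p := INR (pt j)) in *.
  assert (hs : 0 <= s) by (pose proof (pos_INR (rel j)); lra).
  assert (hsp : s + p <= INR T) by (apply le_INR in hd; lra).
  assert (hell0 := ell_gt0 q T q_ge1 T_gt0 0).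
  destruct (classic (exists i, (2 <= i <= k + 1)%nat /\ ell q T i <= p < ell q T (i - 1)))
    as [[i [hi hband]] | hno].
  - set (l := (i - 2)%nat). set (L := ell q T l).
    assert (hp : 0 < p < L / INR q).
    { assert (hi0 := ell_gt0 q T q_ge1 T_gt0 i).
      replace (i - 1)%nat with (S l) in hband by (unfold l; lia).
      rewrite ell_S in hband by assumption; fold L in hband; lra. }
    assert (hpL : p < L).
    { assert (hL : 0 < L) by exact (ell_gt0 q T q_ge1 T_gt0 l).
      assert (1 <= INR q) by (apply (le_INR 1); lia).
      apply (Rlt_le_trans _ (L / INR q)); [lra|].
      apply Rmult_le_reg_r with (INR q); [lra|].
      unfold Rdiv; rewrite Rmult_assoc, Rinv_l by lra; nra. }
    exists (INR (q ^ l) * p); split.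
    + rewrite (ell_0_eq q T q_ge1 l).
      refine (is_RInt_ext _ _ _ _ _ _ (is_RInt_grid_hit_periods L s p (q ^ l) _ _)).
      * intros r0 _; apply ind_iff; symmetry.
        exact (position_crossing_iff_grid_hit i j s r0 hi hband hs hsp).
      * apply ell_gt0; assumption.
      * lra.
    + rewrite (ell_0_eq q T q_ge1 l); fold L; unfold Rdiv in *; rewrite Rmult_assoc.
      apply Rmult_le_compat_l; [apply pos_INR|lra].
  - exists ((ell q T 0 - 0) * 0); split.
    + apply is_RInt_const_on; [lra|].
      intros r0 _; apply ind_false.
      intros [i [hi [hband _]]]; apply hno; exists i; auto.
    + rewrite Rmult_0_r; apply Rdiv_le_0_compat; lra.
Qed.

Lemma is_RInt_num_crossing (S : list SJob) : (forall js, In js S -> sjob_feasible T js) ->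
  exists v : R, is_RInt (num_crossing q k T S) 0 (ell q T 0) v /\
                v <= INR (length S) * (ell q T 0 / INR q).
Proof.
  induction S as [|[j s] S IH]; intros hS.
  - exists ((ell q T 0 - 0) * 0); split.
    + apply is_RInt_const_on; [apply Rlt_le, ell_gt0; assumption|reflexivity].
    + simpl; lra.
  - destruct IH as [v [Iv hv]]; [intros js h; apply hS; right; exact h|].
    destruct (is_RInt_ind_position_crossing j s) as [w [Iw hw]]; [apply hS; left; reflexivity|].
    exists (w + v); split.
    + exact (is_RInt_plus _ _ _ _ _ _ Iw Iv).
    + cbn [length]; rewrite S_INR; lra.
Qed.

End Crossing.

Theorem mainTheorem7 (q k T : nat) (hq : (1 <= q)%nat) (hT : T = (q ^ k)%nat)
  (S : list SJob) (hS : forall js, In js S -> sjob_feasible T js) :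
  exists pr : Riemann_integrable (num_crossing q k T S) 0 (INR T / INR q),
    RiemannInt pr / (INR T / INR q) <= INR (length S) / INR q.
Proof.
  assert (hq0 : 0 < INR q) by (apply lt_0_INR; lia).
  assert (hT0 : 0 < INR T) by (subst T; rewrite pow_INR; apply pow_lt; exact hq0).
  assert (hell0 : ell q T 0 = INR T / INR q) by (unfold ell; simpl; rewrite Rmult_1_r; reflexivity).
  destruct (is_RInt_num_crossing q k T hq hT0 S hS) as [v [Iv hv]].
  rewrite hell0 in Iv, hv.
  exists (ex_RInt_Reals_0 _ _ _ (ex_intro _ v Iv)).
  rewrite <- RInt_Reals, (is_RInt_unique _ _ _ _ Iv).
  assert (hTq : 0 < INR T / INR q) by (apply Rdiv_lt_0_compat; assumption).
  apply (Rmult_le_reg_r (INR T / INR q) _ _ hTq).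
  replace (v / (INR T / INR q) * (INR T / INR q)) with v by (field; lra).
  replace (INR (length S) / INR q * (INR T / INR q))
    with (INR (length S) * (INR T / INR q / INR q)) by (field; lra).
  exact hv.
Qed.
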